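(* Consider the draining problem described in the context, and let $\delta=\sqrt{r^2(B-A)/B}$. If $$\check R\ \ge\ -\left(A-\tfrac{2}{3}B\right)r-\delta(A-B)-\frac{\delta^3}{3r^2}B,$$ then the optimal cost $T^\ast$ of the draining problem satisfies $T^\ast\ge 2r$.
   Context: $\|\cdot\|$ is the Euclidean norm. A single target sits at the fixed position $x\in\mathbb{R}^2$, with sensing range $r>0$ and constants $A,B$ with $B>A$ (uncertainty accumulation rate $A$). The agent has position $s(t)\in\mathbb{R}^2$ with dynamics $\dot s(t)=u(t)$ and control constraint $\|u(t)\|\le 1$. Define $p(s)=\max\{0,\,1-\|s-x\|^2/r^2\}$ and $f_R(R,s)=0$ if $R=0$ and $A-Bp(s)<0$, and $f_R(R,s)=A-Bp(s)$ otherwise. The entrance point $s^\varphi$ and departure point $s^\psi$ are the points where the agent starts, respectively stops, sensing the target, so $\|s^\varphi-x\|=\|s^\psi-x\|=r$; $\check R$ is the uncertainty at arrival. The draining problem is: minimize $T$ over $T$ and controls $u:[0,T]\to\mathbb{R}^2$ subject to $\dot s=u$, $\dot R=f_R(R,s)$, $\|u(t)\|^2\le1$, $\min_{\tau\in[0,T]}R(\tau)=0$, $s(0)=s^\varphi$, $s(T)=s^\psi$, $R(0)=\check R$. *)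

From HB Require Import structures.
From mathcomp Require Import all_boot all_order all_algebra.
From mathcomp Require Import all_classical all_reals all_analysis.
Set Implicit Arguments. Unset Strict Implicit. Unset Printing Implicit Defensive.
Import Order.TTheory GRing.Theory Num.Theory.
Local Open Scope classical_set_scope.
Local Open Scope ring_scope.

Section Draining.
Variable R : realType.

Definition dr_sqdist (a b : R * R) : R := (a.1 - b.1) ^+ 2 + (a.2 - b.2) ^+ 2.
Definition dr_dist (a b : R * R) : R := Num.sqrt (dr_sqdist a b).

Definition dr_p (x : R * R) (r : R) (s : R * R) : R :=
  Num.max 0 (1 - dr_sqdist s x / r ^+ 2).

Definition dr_fR (A B : R) (x : R * R) (r : R) (Rv : R) (s : R * R) : R :=
  if (Rv == 0) && (A - B * dr_p x r s < 0) then 0 else A - B * dr_p x r s.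

Definition dr_delta (A B r : R) : R := Num.sqrt (r ^+ 2 * (B - A) / B).

(* Feasibility of (T, u) for the draining problem, with state trajectories
   s (position) and Rt (uncertainty) understood as absolutely continuous
   (Caratheodory) solutions on [0,T]:
     s(t) = s(0) + \int_0^t u,  Rt(t) = Rt(0) + \int_0^t f_R(Rt, s). *)
Definition dr_Icc0 (t : R) : set R := `[0, t].

Definition draining_feasible (A B : R) (x : R * R) (r : R)
    (sphi spsi : R * R) (Rc : R) (T : R)
    (u s : R -> R * R) (Rt : R -> R) : Prop :=
  measurable_fun `[0, T] (fun t => (u t).1) /\
      measurable_fun `[0, T] (fun t => (u t).2) /\
      (forall t, t \in `[0, T] -> (u t).1 ^+ 2 + (u t).2 ^+ 2 <= 1) /\
      (forall t, t \in `[0, T] ->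
         (\int[lebesgue_measure]_(tau in dr_Icc0 t) ((u tau).1)%:E
            = ((s t).1 - (s 0).1)%:E)%E /\
         (\int[lebesgue_measure]_(tau in dr_Icc0 t) ((u tau).2)%:E
            = ((s t).2 - (s 0).2)%:E)%E) /\
      lebesgue_measure.-integrable `[0, T]
         (fun tau => (dr_fR A B x r (Rt tau) (s tau))%:E) /\
      (forall t, t \in `[0, T] ->
         (\int[lebesgue_measure]_(tau in dr_Icc0 t) (dr_fR A B x r (Rt tau) (s tau))%:E
            = (Rt t - Rt 0)%:E)%E) /\
      ((forall t, t \in `[0, T] -> 0 <= Rt t) /\
       (exists2 t, t \in `[0, T] & Rt t = 0)) /\
      s 0 = sphi /\ s T = spsi /\
      Rt 0 = Rc.

End Draining.

(* Suppose T < 2 r and the uncertainty vanishes at time t0. Moving at unit speed, the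
   agent stays at distance at least r - t from the target on the way in and at least
   r - (T - t) on the way out, and at distance y the uncertainty decreases at rate at
   most Phi'(y), where Phi(y) = (B - A) y - B y^3 / (3 r^2). Integrating over [0, t0],
   split at T / 2 if t0 > T / 2, gives Rc <= Phi(r) - 2 Phi(w) + Phi(z) for some
   0 < w <= z <= r. Since Phi is maximal on [0, +oo) at delta and keeps decreasing once
   it is nonpositive, such a positive quantity is less than Phi(r) + Phi(delta), which
   is exactly the threshold assumed on Rc. *)

From mathcomp Require Import all_boot all_order all_algebra.
From mathcomp Require Import all_classical all_reals all_analysis.
From mathcomp Require Import ring lra.
Import Order.TTheory GRing.Theory Num.Theory numFieldNormedType.Exports.

Set Implicit Arguments.
Unset Strict Implicit.
Unset Printing Implicit Defensive.

Local Open Scope ring_scope.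
Local Open Scope classical_set_scope.

Section Integral_comparison.
Variable R : realType.
Local Notation mu := (@lebesgue_measure R).

Lemma integrable_itv_bounded (f : R -> R) (a b M : R) :
  measurable_fun `[a, b] f -> (forall t, t \in `[a, b]%R -> `|f t| <= M) ->
  mu.-integrable `[a, b] (fun t => (f t)%:E).
Proof.
move=> mf fM; apply: measurable_bounded_integrable => //.
  have := lebesgue_measure_itv `[a, b]%R; rewrite /= => ->.
  by case: ifP => _; rewrite ?ltry // -EFinD ltry.
exists M; split=> [|N MN t /fM fM']; first exact: num_real.
exact: le_trans fM' (ltW MN).
Qed.

Lemma integral_itv_primitive (g F : R -> R) (c T a b : R) :
  mu.-integrable `[c, T] (fun t => (g t)%:E) ->
  (forall t, t \in `[c, T]%R ->
     (\int[mu]_(x in `[c, t]) (g x)%:E)%E = (F t - F c)%:E) ->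
  c <= a -> a <= b -> b <= T ->
  (\int[mu]_(x in `[a, b]) (g x)%:E)%E = (F b - F a)%:E.
Proof.
move=> ig hF ca ab bT.
have incT t : c <= t -> t <= T -> t \in `[c, T]%R by move=> ct tT; rewrite in_itv /= ct tT.
have scb : `[c, b] `<=` `[c, T] by apply: subset_itvl; rewrite bnd_simp.
have mg := measurable_funS (measurable_itv _) scb (measurable_int _ ig).
have sab : `]a, b] `<=` `[c, b].
  by move=> t /=; rewrite !in_itv /= => /andP[/ltW a_t tb]; rewrite tb (le_trans ca a_t).
have U : `[c, b] = `[c, a] `|` `]a, b] :> set R.
  by apply: itv_bndbnd_setU; rewrite bnd_simp.
have D : [disjoint `[c, a] & `]a, b]].
  apply/disj_setPS => t /= []; rewrite !in_itv /= => /andP[_ ta] /andP[a_t _].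
  by move: (lt_le_trans a_t ta); rewrite ltxx.
rewrite -integral_itv_obnd_cbnd; last exact: measurable_funS (measurable_itv _) sab mg.
have := @integral_setU _ _ _ mu `[c, a] `]a, b] (fun t => (g t)%:E).
rewrite -U => /(_ (measurable_itv _) (measurable_itv _) mg D).
rewrite !hF ?incT ?(le_trans ca ab) ?(le_trans ab bT) //.
case: (\int[mu]_(x in `]a, b]) (g x)%:E)%E => [i| |] //; rewrite ?addey //.
by rewrite -EFinD => -[e]; congr EFin; lra.
Qed.

Lemma poly_increment_le_integral (p : {poly R}) (g : R -> R) (a b : R) :
  a < b -> mu.-integrable `[a, b] (fun t => (g t)%:E) ->
  (forall t, a <= t <= b -> p^`().[t] <= g t) ->
  ((p.[b] - p.[a])%:E <= \int[mu]_(x in `[a, b]) (g x)%:E)%E.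
Proof.
move=> ab ig p'g.
have cp' : {within `[a, b], continuous (fun t => p^`().[t])}.
  by apply: continuous_subspaceT => t; exact: continuous_horner.
have ip' : mu.-integrable `[a, b] (fun t => (p^`().[t])%:E).
  by apply: continuous_compact_integrable => //; exact: segment_compact.
rewrite EFinB -(@continuous_FTC2 _ (fun t => p^`().[t]) (horner p) a b ab cp').
- by apply: le_integral => // t; rewrite inE /= in_itv /= lee_fin; exact: p'g.
- split; first by move=> t _; exact: derivable_horner.
  + exact/cvg_at_right_filter/continuous_horner.
  + exact/cvg_at_left_filter/continuous_horner.
- by move=> t _; rewrite derive1E; exact: derive_val.
Qed.

Lemma poly_increment_le_primitive (p : {poly R}) (g F : R -> R) (c T a b : R) :
  mu.-integrable `[c, T] (fun t => (g t)%:E) ->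
  (forall t, t \in `[c, T]%R ->
     (\int[mu]_(x in `[c, t]) (g x)%:E)%E = (F t - F c)%:E) ->
  c <= a -> a <= b -> b <= T ->
  (forall t, a <= t <= b -> p^`().[t] <= g t) ->
  p.[b] - p.[a] <= F b - F a.
Proof.
move=> ig hF ca ab bT p'g.
move: ab; rewrite le_eqVlt => /predU1P[<-|ab]; first by rewrite !subrr.
rewrite -lee_fin -(integral_itv_primitive ig hF ca (ltW ab) bT).
apply: poly_increment_le_integral => //.
by apply: integrableS ig => //; apply: subset_itvScc; rewrite bnd_simp.
Qed.

End Integral_comparison.

Lemma cauchy_schwarz2 (R : rcfType) (a1 a2 b1 b2 : R) :
  a1 * b1 + a2 * b2 <= Num.sqrt (a1 ^+ 2 + a2 ^+ 2) * Num.sqrt (b1 ^+ 2 + b2 ^+ 2).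
Proof.
rewrite -sqrtrM ?addr_ge0 ?sqr_ge0 //; apply: le_trans (ler_norm _) _.
rewrite -sqrtr_sqr; apply: ler_wsqrtr.
have : 0 <= (a1 * b2 - a2 * b1) ^+ 2 by rewrite sqr_ge0.
nra.
Qed.

Section Euclidean_plane.
Variable R : realType.
Implicit Types a b c : R * R.

Lemma dr_sqdist_ge0 a b : 0 <= dr_sqdist a b.
Proof. by rewrite /dr_sqdist addr_ge0 ?sqr_ge0. Qed.

Lemma dr_dist_ge0 a b : 0 <= dr_dist a b.
Proof. exact: sqrtr_ge0. Qed.

Lemma dr_dist_sqr a b : dr_dist a b ^+ 2 = dr_sqdist a b.
Proof. by rewrite sqr_sqrtr ?dr_sqdist_ge0. Qed.

Lemma dr_distC a b : dr_dist a b = dr_dist b a.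
Proof.
by rewrite /dr_dist /dr_sqdist -!(sqrrN (a.1 - _)) -!(sqrrN (a.2 - _)) !opprB.
Qed.

Lemma dr_dist_triangle a b c : dr_dist a c <= dr_dist a b + dr_dist b c.
Proof.
have := cauchy_schwarz2 (a.1 - b.1) (a.2 - b.2) (b.1 - c.1) (b.2 - c.2).
rewrite -/(dr_sqdist a b) -/(dr_sqdist b c) -/(dr_dist a b) -/(dr_dist b c).
have : dr_dist a c ^+ 2 = dr_dist a b ^+ 2 + dr_dist b c ^+ 2
    + 2 * ((a.1 - b.1) * (b.1 - c.1) + (a.2 - b.2) * (b.2 - c.2)).
  by rewrite !dr_dist_sqr /dr_sqdist; ring.
have := dr_dist_ge0 a b; have := dr_dist_ge0 b c; have := dr_dist_ge0 a c.
nra.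
Qed.

End Euclidean_plane.

Section Unit_speed.
Variable R : realType.
Local Notation mu := (@lebesgue_measure R).
Variables (T : R) (u s : R -> R * R).
Hypothesis u1_mf : measurable_fun `[0, T] (fun t => (u t).1).
Hypothesis u2_mf : measurable_fun `[0, T] (fun t => (u t).2).
Hypothesis u_le1 : forall t, t \in `[0, T]%R -> (u t).1 ^+ 2 + (u t).2 ^+ 2 <= 1.
Hypothesis s_primitive : forall t, t \in `[0, T]%R ->
  (\int[mu]_(x in dr_Icc0 t) ((u x).1)%:E)%E = ((s t).1 - (s 0).1)%:E /\
  (\int[mu]_(x in dr_Icc0 t) ((u x).2)%:E)%E = ((s t).2 - (s 0).2)%:E.

Let norm_le1 (y z : R) : y ^+ 2 + z ^+ 2 <= 1 -> `|y| <= 1.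
Proof.
move=> yz; rewrite -(@expr_le1 _ 2) // real_normK ?num_real //.
by apply: le_trans yz; rewrite lerDl sqr_ge0.
Qed.

Let u1_int : mu.-integrable `[0, T] (fun t => ((u t).1)%:E).
Proof. by apply: (integrable_itv_bounded (M := 1) u1_mf) => t /u_le1 /norm_le1. Qed.

Let u2_int : mu.-integrable `[0, T] (fun t => ((u t).2)%:E).
Proof.
by apply: (integrable_itv_bounded (M := 1) u2_mf) => t /u_le1; rewrite addrC => /norm_le1.
Qed.

Lemma integrable_dot (w1 w2 : R) :
  mu.-integrable `[0, T] (fun t => (w1 * (u t).1 + w2 * (u t).2)%:E).
Proof.
by apply: eq_integrable (integrableD _ (integrableZl _ w1 u1_int) (integrableZl _ w2 u2_int)).
Qed.

Lemma dot_primitive (w1 w2 : R) t : t \in `[0, T]%R ->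
  (\int[mu]_(x in dr_Icc0 t) (w1 * (u x).1 + w2 * (u x).2)%:E)%E =
  ((w1 * (s t).1 + w2 * (s t).2) - (w1 * (s 0).1 + w2 * (s 0).2))%:E.
Proof.
move=> t0T; have [e1 e2] := s_primitive t0T; rewrite /dr_Icc0 in e1 e2 *.
have s0t : `[0, t] `<=` `[0, T].
  by apply: subset_itvl; move: t0T; rewrite in_itv /= bnd_simp => /andP[].
have j1 : mu.-integrable `[0, t] (fun x => ((u x).1)%:E) by apply: integrableS u1_int.
have j2 : mu.-integrable `[0, t] (fun x => ((u x).2)%:E) by apply: integrableS u2_int.
under eq_integral => x _ do rewrite EFinD !EFinM.
rewrite integralD ?integralZl ?e1 ?e2 //; last 2 first.
- exact: integrableZl.
- exact: integrableZl.
by rewrite -!EFinM -EFinD; congr EFin; ring.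
Qed.

(* With w := s a - s b, Cauchy-Schwarz gives w . u >= - |w| on [a, b], and integrating
   yields - |w|^2 = w . (s b - s a) >= - |w| (b - a). *)
Lemma dist_traj_le a b : 0 <= a -> a <= b -> b <= T -> dr_dist (s b) (s a) <= b - a.
Proof.
move=> a0 ab bT.
set N := dr_dist (s b) (s a).
pose w1 := (s a).1 - (s b).1; pose w2 := (s a).2 - (s b).2.
have N0 : 0 <= N := dr_dist_ge0 _ _.
have NN : N ^+ 2 = w1 ^+ 2 + w2 ^+ 2 by rewrite dr_dist_sqr /dr_sqdist /w1 /w2; ring.
have dot_ge t : a <= t <= b -> (- N *: 'X)^`().[t] <= w1 * (u t).1 + w2 * (u t).2.
  rewrite derivZ derivX hornerZ hornerC mulr1 => /andP[a_t tb].
  have /u_le1 u_t : t \in `[0, T]%R by rewrite in_itv /= (le_trans a0 a_t) (le_trans tb bT).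
  have := cauchy_schwarz2 (- w1) (- w2) (u t).1 (u t).2.
  rewrite !sqrrN -NN sqrtr_sqr ger0_norm //.
  have : Num.sqrt ((u t).1 ^+ 2 + (u t).2 ^+ 2) <= 1 by rewrite -sqrtr1 ler_wsqrtr.
  have := sqrtr_ge0 ((u t).1 ^+ 2 + (u t).2 ^+ 2).
  nra.
have := poly_increment_le_primitive (F := fun t => w1 * (s t).1 + w2 * (s t).2)
  (integrable_dot w1 w2) (dot_primitive w1 w2) a0 ab bT dot_ge.
have -> : w1 * (s b).1 + w2 * (s b).2 - (w1 * (s a).1 + w2 * (s a).2) = - N ^+ 2.
  by rewrite NN /w1 /w2; ring.
rewrite !hornerE /=; nra.
Qed.

End Unit_speed.

Lemma horner_comp_reflect (R : comNzRingType) (p : {poly R}) (c t : R) :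
  (p \Po (c%:P - 'X)).[t] = p.[c - t].
Proof. by rewrite horner_comp !hornerE. Qed.

Lemma horner_deriv_comp_reflect (R : comNzRingType) (p : {poly R}) (c t : R) :
  ((p \Po (c%:P - 'X))^`()).[t] = - p^`().[c - t].
Proof.
by rewrite deriv_comp derivB derivC derivX sub0r mulrN1 hornerN horner_comp !hornerE.
Qed.

Section Drain_potential.
Variables (R : realType) (A B r : R).

(* [- drain_poly^`()] at y is the lower bound A - B (1 - y^2/r^2) on the rate of change
   of the uncertainty while the agent stays at distance at least y from the target. *)
Definition drain_poly : {poly R} := (B - A) *: 'X - (B / (3 * r ^+ 2)) *: 'X ^+ 3.

Local Notation delta := (dr_delta A B r).

Lemma drain_polyE y : drain_poly.[y] = (B - A) * y - B / (3 * r ^+ 2) * y ^+ 3.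
Proof. by rewrite !hornerE. Qed.

Hypothesis r_gt0 : 0 < r.

Lemma deriv_drain_poly y : drain_poly^`().[y] = B - A - B * y ^+ 2 / r ^+ 2.
Proof.
rewrite derivB !derivZ derivX derivXn !hornerE /=.
by field; rewrite gt_eqF.
Qed.

Lemma drain_poly_threshold :
  drain_poly.[r] + drain_poly.[delta] =
  - (A - 2 / 3 * B) * r - delta * (A - B) - delta ^+ 3 / (3 * r ^+ 2) * B.
Proof. by rewrite !drain_polyE; field; rewrite gt_eqF. Qed.

Hypotheses (B_gt0 : 0 < B) (AB : A < B).

Let drain_coef_ge0 : 0 <= B / (3 * r ^+ 2).
Proof. by rewrite divr_ge0 ?mulr_ge0 ?ltW ?exprn_gt0. Qed.

Let BA_delta : B - A = B * delta ^+ 2 / r ^+ 2.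
Proof.
rewrite sqr_sqrtr; last by rewrite divr_ge0 ?mulr_ge0 ?sqr_ge0 ?subr_ge0 ?ltW.
by field; rewrite !gt_eqF.
Qed.

Lemma drain_poly_le_delta y : 0 <= y -> drain_poly.[y] <= drain_poly.[delta].
Proof.
move=> y0; have delta0 : 0 <= delta := sqrtr_ge0 _.
have -> : drain_poly.[delta] =
    drain_poly.[y] + B / (3 * r ^+ 2) * ((delta - y) ^+ 2 * (2 * delta + y)).
  by rewrite !drain_polyE BA_delta; field; rewrite gt_eqF.
by rewrite lerDl mulr_ge0 // mulr_ge0 ?sqr_ge0 //; lra.
Qed.

Lemma drain_poly_le_nonpos w z :
  0 < w -> w <= z -> drain_poly.[w] <= 0 -> drain_poly.[z] <= drain_poly.[w].
Proof.
have k0 := drain_coef_ge0.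
rewrite !drain_polyE; set k := B / (3 * r ^+ 2) in k0 * => w0 wz Pw.
have kw : B - A <= k * w ^+ 2 by nra.
have : 0 <= (z - w) * (k * (z ^+ 2 + z * w + w ^+ 2) - (B - A)).
  rewrite mulr_ge0 ?subr_ge0 //.
  have : 0 <= k * (z ^+ 2 + z * w) by rewrite mulr_ge0 // addr_ge0 ?sqr_ge0 ?mulr_ge0 //; lra.
  nra.
nra.
Qed.

Lemma drain_poly_budget_lt v w z : 0 < w -> w <= v -> w <= z ->
  0 < drain_poly.[v] - 2 * drain_poly.[w] + drain_poly.[z] ->
  drain_poly.[v] - 2 * drain_poly.[w] + drain_poly.[z] < drain_poly.[v] + drain_poly.[delta].
Proof.
move=> w0 wv wz; have [Pw|Pw] := lerP drain_poly.[w] 0.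
  have := drain_poly_le_nonpos w0 wv Pw; have := drain_poly_le_nonpos w0 wz Pw; lra.
have := drain_poly_le_delta (ltW (lt_le_trans w0 wz)); lra.
Qed.

End Drain_potential.

Section Sensing.
Variables (R : realType) (A B : R) (x : R * R) (r : R).
Hypotheses (r_gt0 : 0 < r) (B_ge0 : 0 <= B).

Lemma dr_p_le_dist q y : 0 <= y <= r -> y <= dr_dist q x -> dr_p x r q <= 1 - y ^+ 2 / r ^+ 2.
Proof.
move=> /andP[y0 yr] yq; have r2 : 0 < r ^+ 2 by rewrite exprn_gt0.
have yq2 : y ^+ 2 <= dr_sqdist q x by rewrite -dr_dist_sqr; nra.
rewrite /dr_p ge_max subr_ge0 ler_pdivrMr // mul1r lerB ?ler_pM2r ?invr_gt0 //.
by rewrite andbT; nra.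
Qed.

Lemma dr_fR_ge_deriv Rv q y : 0 <= y <= r -> y <= dr_dist q x ->
  - (drain_poly A B r)^`().[y] <= dr_fR A B x r Rv q.
Proof.
move=> yr yq; rewrite deriv_drain_poly // /dr_fR.
have -> : - (B - A - B * y ^+ 2 / r ^+ 2) = A - B * (1 - y ^+ 2 / r ^+ 2) by ring.
have h : A - B * (1 - y ^+ 2 / r ^+ 2) <= A - B * dr_p x r q.
  by rewrite lerB // ler_wpM2l // dr_p_le_dist.
by case: ifP => // /andP[_ /ltW]; exact: le_trans h.
Qed.

End Sensing.

Section Feasible_trajectory.
Variables (R : realType) (A B : R) (x : R * R) (r : R) (sphi spsi : R * R).
Variables (Rc T : R) (u s : R -> R * R) (Rt : R -> R).
Hypotheses (r_gt0 : 0 < r) (B_ge0 : 0 <= B).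
Hypothesis feas : draining_feasible A B x r sphi spsi Rc T u s Rt.

Local Notation Phi := (drain_poly A B r).

Lemma feasible_dist_le a b : 0 <= a -> a <= b -> b <= T -> dr_dist (s b) (s a) <= b - a.
Proof.
case: feas => u1_mf [u2_mf [u_le1 [s_prim _]]].
exact: (dist_traj_le u1_mf u2_mf u_le1 s_prim).
Qed.

Lemma feasible_uncertainty_increment (p : {poly R}) a b :
  0 <= a -> a <= b -> b <= T ->
  (forall t, a <= t <= b -> p^`().[t] <= dr_fR A B x r (Rt t) (s t)) ->
  p.[b] - p.[a] <= Rt b - Rt a.
Proof.
by case: feas => _ [_ [_ [_ [fR_int [Rt_prim _]]]]]; exact: poly_increment_le_primitive.
Qed.

Lemma uncertainty_approach_ge a b : dr_dist sphi x = r ->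
  0 <= a -> a <= b -> b <= T -> b <= r -> Phi.[r - b] - Phi.[r - a] <= Rt b - Rt a.
Proof.
move=> hphi a0 ab bT br.
have := feasible_uncertainty_increment (p := Phi \Po (r%:P - 'X)) a0 ab bT.
rewrite !horner_comp_reflect; apply=> t /andP[a_t tb].
rewrite horner_deriv_comp_reflect; apply: dr_fR_ge_deriv => //.
  by apply/andP; split; lra.
have s0 : s 0 = sphi by case: feas => _ [_ [_ [_ [_ [_ [_ []]]]]]].
have := dr_dist_triangle sphi (s t) x; rewrite hphi dr_distC -s0.
have := feasible_dist_le (lexx 0) (le_trans a0 a_t) (le_trans tb bT); lra.
Qed.

Lemma uncertainty_departure_ge a b : dr_dist spsi x = r ->
  0 <= a -> a <= b -> b <= T -> T - r <= a ->
  Phi.[r - (T - a)] - Phi.[r - (T - b)] <= Rt b - Rt a.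
Proof.
move=> hpsi a0 ab bT ar.
have := feasible_uncertainty_increment
  (p := - ((Phi \Po (r%:P - 'X)) \Po (T%:P - 'X))) a0 ab bT.
rewrite !hornerN !horner_comp_reflect opprK => inc.
rewrite addrC; apply: inc => t /andP[a_t tb].
rewrite derivN hornerN !horner_deriv_comp_reflect !opprK.
apply: dr_fR_ge_deriv => //; first by apply/andP; split; lra.
have sT : s T = spsi by case: feas => _ [_ [_ [_ [_ [_ [_ [_ []]]]]]]].
have := dr_dist_triangle spsi (s t) x; rewrite hpsi -sT.
have := feasible_dist_le (le_trans a0 a_t) (le_trans tb bT) (lexx T); lra.
Qed.

End Feasible_trajectory.

Local Close Scope classical_set_scope.

Theorem lemma4 (R : realType) (x : R * R) (r A B : R) (sphi spsi : R * R)
    (Rc : R) :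
  0 < r -> 0 < A -> A < B ->
  dr_dist sphi x = r -> dr_dist spsi x = r ->
  0 < Rc ->
  - (A - 2 / 3 * B) * r - dr_delta A B r * (A - B)
    - (dr_delta A B r) ^+ 3 / (3 * r ^+ 2) * B <= Rc ->
  forall (T : R) (u s : R -> R * R) (Rt : R -> R),
    draining_feasible A B x r sphi spsi Rc T u s Rt ->
    2 * r <= T.
Proof.
move=> r0 A0 AB hphi hpsi Rc0 + T u s Rt feas.
have B0 : 0 < B := lt_trans A0 AB.
rewrite -drain_poly_threshold // => threshold.
have approach := uncertainty_approach_ge r0 (ltW B0) feas hphi.
have departure := uncertainty_departure_ge r0 (ltW B0) feas hpsi.
have budget_lt := drain_poly_budget_lt r0 B0 AB.
have [_ [_ [_ [_ [_ [_ [[_ [t0]]]]]]]]] := feas.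
rewrite in_itv /= => /andP[t0_ge0 t0_le] Rt0 [_ [_ Rt_0]].
rewrite leNgt; apply/negP => T_lt.
set Phi := drain_poly A B r in approach departure threshold budget_lt.
have [t0_le_half|half_lt_t0] := lerP t0 (T / 2).
- have t0_le_r : t0 <= r by lra.
  have := approach 0 t0 (lexx 0) t0_ge0 t0_le t0_le_r.
  rewrite Rt0 Rt_0 subr0 sub0r => drained.
  suff : Phi.[r] - 2 * Phi.[r - t0] + Phi.[r - t0] < Phi.[r] + Phi.[dr_delta A B r] by lra.
  by apply: budget_lt; lra.
- have [half_ge0 half_le_T half_le_r T_sub_r_le] :
      [/\ 0 <= T / 2, T / 2 <= T, T / 2 <= r & T - r <= T / 2] by split; lra.
  have := approach 0 (T / 2) (lexx 0) half_ge0 half_le_T half_le_r.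
  have := departure (T / 2) t0 half_ge0 (ltW half_lt_t0) t0_le T_sub_r_le.
  rewrite (_ : T - T / 2 = T / 2) ?Rt0 ?Rt_0 ?subr0; last by field.
  move=> drained_late drained_early.
  suff : Phi.[r] - 2 * Phi.[r - T / 2] + Phi.[r - (T - t0)] < Phi.[r] + Phi.[dr_delta A B r].
    lra.
  by apply: budget_lt; lra.
Qed.
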